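(* Let $\kappa:=\operatorname{arccosh}(3/2)$, $p$ a positive integer, $\xi:=\kappa+2p\pi i$, and \[ F(z):=\frac1\xi\left(\mathcal{L}_2\left(\frac{\xi(1-z)}{2\pi i}-p+1\right)-\mathcal{L}_2\left(\frac{\xi(1+z)}{2\pi i}-p\right)\right)-\kappa z+\frac{4p\pi^2}{\xi}. \] If $-\kappa<\Re(\xi z)<\kappa$ or $0<\Im(\xi z)<2\pi$, then \[ F(z)=\frac1\xi\mathrm{Li}_2\left(e^{-\xi(1+z)}\right)-\frac1\xi\mathrm{Li}_2\left(e^{-\xi(1-z)}\right)+\kappa z-2\pi i. \] Moreover, if $0<\Im(\xi z)<2\pi$, then also \[ F(z)=\frac1\xi\mathrm{Li}_2\left(e^{\xi(1-z)}\right)-\frac1\xi\mathrm{Li}_2\left(e^{\xi(1+z)}\right)-\kappa z+\frac{4p\pi^2}{\xi}. \]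
   Context: $\mathcal{L}_2(w):=\mathrm{Li}_2(e^{2\pi iw})$ if $\Im w\ge0$ and $\mathcal{L}_2(w):=\pi^2(2w^2-2w+\frac13)-\mathrm{Li}_2(e^{-2\pi iw})$ if $\Im w<0$, for $w\in\mathbb{C}\setminus((-\infty,0]\cup[1,\infty))$, where $\mathrm{Li}_2(z)=-\int_0^z\frac{\log(1-x)}{x}dx$ is the dilogarithm with branch cut $[1,\infty)$. *)

From Stdlib Require Import Reals.
From Coquelicot Require Import Coquelicot.
Open Scope R_scope.

Definition Carg (w : C) : R :=
  if Rle_dec 0 (Im w) then acos (Re w / Cmod w) else - acos (Re w / Cmod w).

Definition Clog (w : C) : C := (ln (Cmod w), Carg w).

Definition Cexp (w : C) : C :=
  (exp (Re w) * cos (Im w), exp (Re w) * sin (Im w)).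

(* Dilogarithm Li2 z = - int_0^z log(1-x)/x dx, integrated along the segment
   [0,z] (x = t z), which lies in the star-shaped domain C \ [1,oo). *)
Definition Li2 (z : C) : C :=
  Copp (RInt (V := C_R_CompleteNormedModule)
          (fun t : R => Cdiv (Clog (Cminus 1 (Cmult (RtoC t) z))) (RtoC t)) 0 1).

Definition calL2 (w : C) : C :=
  if Rle_dec 0 (Im w) then Li2 (Cexp (Cmult (Cmult (RtoC (2 * PI)) Ci) w))
  else Cminus
         (Cmult (RtoC (PI ^ 2))
            (Cplus (Cminus (Cmult 2 (Cmult w w)) (Cmult 2 w)) (RtoC (1 / 3))))
         (Li2 (Cexp (Copp (Cmult (Cmult (RtoC (2 * PI)) Ci) w)))).

(* kappa = arccosh(3/2) = ln(3/2 + sqrt((3/2)^2 - 1)). *)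
Definition kappa : R := ln (3 / 2 + sqrt ((3 / 2) ^ 2 - 1)).

Definition xi (p : nat) : C := (kappa, 2 * INR p * PI).

Definition twopii : C := Cmult (RtoC (2 * PI)) Ci.

Definition F (p : nat) (z : C) : C :=
  Cplus
    (Cminus
       (Cmult (Cinv (xi p))
          (Cminus
             (calL2 (Cplus (Cminus (Cdiv (Cmult (xi p) (Cminus 1 z)) twopii)
                                   (RtoC (INR p))) 1))
             (calL2 (Cminus (Cdiv (Cmult (xi p) (Cplus 1 z)) twopii)
                            (RtoC (INR p))))))
       (Cmult (RtoC kappa) z))
    (Cdiv (RtoC (4 * INR p * PI ^ 2)) (xi p)).

(* The arguments w1, w2 of the two calL2 terms of F satisfy e^(2 pi i w1) = e^(xi (1 - z)) and
   e^(2 pi i w2) = e^(xi (1 + z)).  The hypothesis -kappa < Re (xi z) < kappa puts both in the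
   lower half-plane and 0 < Im (xi z) < 2 pi puts both in the strip 0 < Re w < 1; in either
   case calL2 can be evaluated by its lower-half-plane formula, because on the strip the two
   branches of calL2 agree.  That agreement is the inversion formula
   Li2 x + Li2 (1/x) = - pi^2/6 - log(-x)^2/2 for x = e^(2 pi i w), and the difference of the
   two quadratic terms is exactly what turns the first expression for F into the second.

   The inversion formula is proved on the real and imaginary parts of the defining integral
   of Li2.  For x = r e^(i th) the r-derivative of (left side - right side) vanishes, which
   reduces it to r = 1; there - Re Li2 (e^(i th)) has th-derivative (pi - th)/2, and its value
   pi^2/12 at th = pi follows by comparing th = pi/2 with th = pi. *)

From Stdlib Require Import Reals Lra Lia.
From Coquelicot Require Import Coquelicot.
Open Scope R_scope.

Lemma Cmod_add_Re_pos (w : C) : Im w <> 0 \/ 0 < Re w -> 0 < Cmod w + Re w.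
Proof.
  intros Hw.
  destruct (Req_dec (Im w) 0) as [Him | Him].
  - destruct Hw as [Hw | Hw]; [contradiction |].
    pose proof (Cmod_ge_0 w); lra.
  - assert (Hlt : Rabs (Re w) < Cmod w).
    { rewrite <- (Rabs_right (Cmod w)) by apply Rle_ge, Cmod_ge_0.
      apply Rsqr_lt_abs_0; unfold Rsqr; pose proof (Cmod2_alt w); pose proof (pow2_gt_0 _ Him); simpl in *; lra. }
    pose proof (Rle_abs (- Re w)) as Habs; rewrite Rabs_Ropp in Habs; lra.
Qed.

Lemma Carg_unique (w : C) (al : R) : w <> 0%C -> - PI < al <= PI ->
  Re w = Cmod w * cos al -> Im w = Cmod w * sin al -> Carg w = al.
Proof.
  intros Hw Hal Hre Him.
  assert (Hm : 0 < Cmod w) by (apply Cmod_gt_0; auto).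
  assert (Hc : Re w / Cmod w = cos al) by (rewrite Hre; field; lra).
  unfold Carg; rewrite Hc.
  destruct (Rle_dec 0 (Im w)) as [H | H].
  - assert (0 <= al).
    { destruct (Rle_dec 0 al); auto.
      pose proof (sin_lt_0_var al ltac:(lra) ltac:(lra)); nra. }
    apply acos_cos; lra.
  - assert (al < 0).
    { destruct (Rlt_dec al 0); auto.
      pose proof (sin_ge_0 al ltac:(lra) ltac:(lra)); nra. }
    rewrite <- cos_neg, acos_cos; lra.
Qed.

Lemma Carg_polar (w : C) : w <> 0%C ->
  Re w = Cmod w * cos (Carg w) /\ Im w = Cmod w * sin (Carg w).
Proof.
  intros Hw.
  assert (Hm : 0 < Cmod w) by (apply Cmod_gt_0; auto).
  pose proof (Cmod2_alt w) as Hsq.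
  assert (Hb : -1 <= Re w / Cmod w <= 1).
  { pose proof (re_le_Cmod w) as Hre; apply Rabs_le_between in Hre.
    split; apply (Rmult_le_reg_r (Cmod w)); auto; field_simplify; lra. }
  assert (Hs : sqrt (1 - (Re w / Cmod w)²) = Rabs (Im w) / Cmod w).
  { replace (1 - (Re w / Cmod w)²) with (Im w / Cmod w)².
    - rewrite sqrt_Rsqr_abs, Rabs_div, (Rabs_right (Cmod w)); lra.
    - apply Rmult_eq_reg_r with (Cmod w ^ 2); [| apply pow_nonzero; lra].
      unfold Rsqr; field_simplify; lra. }
  unfold Carg; destruct (Rle_dec 0 (Im w)).
  - rewrite cos_acos, sin_acos, Hs, Rabs_right by lra; split; field; lra.
  - rewrite cos_neg, sin_neg, cos_acos, sin_acos, Hs, Rabs_left by lra; split; field; lra.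
Qed.

Lemma Carg_half_angle (w : C) : Im w <> 0 \/ 0 < Re w ->
  Carg w = 2 * atan (Im w / (Cmod w + Re w)).
Proof.
  intros Hw.
  pose proof (Cmod_add_Re_pos w Hw) as Hp.
  assert (Hw0 : w <> 0%C) by (intros ->; simpl in Hw; lra).
  assert (Hm : 0 < Cmod w) by (apply Cmod_gt_0; auto).
  pose proof (Cmod2_alt w) as Hsq.
  set (t := Im w / (Cmod w + Re w)).
  assert (Ht : 0 < 1 + t²) by (pose proof (Rle_0_sqr t); lra).
  assert (Hsq1 : sqrt (1 + t²) * sqrt (1 + t²) = 1 + t²) by (apply sqrt_sqrt; lra).
  assert (Hsq0 : 0 < sqrt (1 + t²)) by (apply sqrt_lt_R0; lra).
  assert (Ht2 : 1 + t² = 2 * Cmod w / (Cmod w + Re w)).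
  { unfold t, Rsqr; field_simplify_eq; [nra | lra]. }
  apply Carg_unique; auto.
  - pose proof (atan_bound t); lra.
  - rewrite cos_2a_cos, cos_atan; set (s := sqrt (1 + t²)) in *.
    replace (2 * (1 / s) * (1 / s) - 1) with (2 / (1 + t²) - 1)
      by (rewrite <- Hsq1; field; lra).
    rewrite Ht2; field; lra.
  - rewrite sin_2a, cos_atan, sin_atan; set (s := sqrt (1 + t²)) in *.
    replace (2 * (t / s) * (1 / s)) with (2 * t / (1 + t²))
      by (rewrite <- Hsq1; field; lra).
    rewrite Ht2; unfold t; field; lra.
Qed.

Lemma Carg_Im_ge0 (w : C) : 0 <= Im w -> 0 <= Carg w <= PI.
Proof. intros H; unfold Carg; destruct (Rle_dec 0 (Im w)); [apply acos_bound | lra]. Qed.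

Lemma Carg_Im_lt0 (w : C) : Im w < 0 -> - PI <= Carg w <= 0.
Proof.
  intros H; unfold Carg; destruct (Rle_dec 0 (Im w)); [lra |].
  pose proof (acos_bound (Re w / Cmod w)); lra.
Qed.

Definition chord_slope (f : R -> R) (l s : R) : R :=
  if Req_EM_T s 0 then l else f s / s.

Lemma locally_neq0 (s : R) : s <> 0 -> locally s (fun u => u <> 0).
Proof.
  intros Hs; destruct (Rlt_dec s 0).
  - apply (locally_interval _ s m_infty 0); simpl; auto; intros; lra.
  - apply (locally_interval _ s 0 p_infty); simpl; auto; [lra | intros; lra].
Qed.

Lemma chord_slope_continuous0 (f : R -> R) (l : R) :
  f 0 = 0 -> is_derive f 0 l -> continuous (chord_slope f l) 0.
Proof.
  intros Hf0 Hd; apply continuity_pt_filterlim; apply is_derive_Reals in Hd.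
  intros eps Heps; destruct (Hd eps Heps) as [del Hdel].
  exists del; split; [apply cond_pos |].
  intros x [[_ Hx] Hx2]; simpl in *; unfold R_dist in *.
  unfold chord_slope; destruct (Req_EM_T 0 0); [| congruence].
  destruct (Req_EM_T x 0) as [E | _]; [congruence |].
  specialize (Hdel x (not_eq_sym Hx)).
  rewrite Rplus_0_l, Hf0, Rminus_0_r in Hdel; rewrite Rminus_0_r in Hx2; auto.
Qed.

Lemma chord_slope_continuous (f : R -> R) (l s : R) :
  s <> 0 -> ex_derive f s -> continuous (chord_slope f l) s.
Proof.
  intros Hs Hd; apply (continuous_ext_loc _ (fun u => f u / u)).
  - generalize (locally_neq0 s Hs); apply filter_imp; intros u Hu.
    unfold chord_slope; destruct (Req_EM_T u 0); [contradiction | auto].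
  - apply (ex_derive_continuous (K := R_AbsRing) (V := R_NormedModule)).
    apply ex_derive_div; auto; apply ex_derive_id.
Qed.

Lemma ex_RInt_chord_slope (f : R -> R) (l X : R) : 0 <= X ->
  f 0 = 0 -> is_derive f 0 l -> (forall s, 0 < s <= X -> ex_derive f s) ->
  ex_RInt (chord_slope f l) 0 X.
Proof.
  intros HX Hf0 Hd Hder; apply (ex_RInt_continuous (V := R_CompleteNormedModule)).
  intros s Hs; rewrite Rmin_left, Rmax_right in Hs by lra.
  destruct (Req_dec s 0) as [-> | Hs0].
  - apply chord_slope_continuous0; auto.
  - apply chord_slope_continuous; auto; apply Hder; lra.
Qed.

Lemma RInt_chord_slope_dilate (f g : R -> R) (l l' r : R) : 0 < r ->
  (forall y, g y = f (r * y)) -> l' = r * l -> ex_RInt (chord_slope f l) 0 r ->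
  RInt (chord_slope g l') 0 1 = RInt (chord_slope f l) 0 r.
Proof.
  intros Hr Hg Hl Hex.
  pose proof (RInt_comp_lin (V := R_CompleteNormedModule) (chord_slope f l) r 0 0 1) as H.
  rewrite Rmult_0_r, Rmult_1_r, !Rplus_0_r in H; rewrite <- (H Hex).
  apply RInt_ext; intros y Hy; rewrite Rmin_left, Rmax_right in Hy by lra.
  change (chord_slope g l' y = r * chord_slope f l (r * y + 0)).
  rewrite Rplus_0_r; unfold chord_slope.
  destruct (Req_EM_T y 0); [lra |].
  destruct (Req_EM_T (r * y) 0) as [E | _]; [apply Rmult_integral in E; lra |].
  rewrite Hg; field; lra.
Qed.

Lemma is_derive_RInt_chord_slope (f : R -> R) (l r : R) : 0 < r ->
  (forall x, 0 < x -> ex_RInt (chord_slope f l) 0 x) -> ex_derive f r ->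
  is_derive (fun x => RInt (chord_slope f l) 0 x) r (f r / r).
Proof.
  intros Hr Hex Hd.
  replace (f r / r) with (chord_slope f l r)
    by (unfold chord_slope; destruct (Req_EM_T r 0); [lra | auto]).
  apply (is_derive_RInt (V := R_NormedModule) _ _ 0 r).
  - apply (locally_interval _ r 0 p_infty); simpl; auto.
    intros y Hy _; apply (RInt_correct (V := R_CompleteNormedModule)), Hex; auto.
  - apply chord_slope_continuous; auto; lra.
Qed.

Lemma is_derive_RInt_chord_slope_inv (f1 f2 h : R -> R) (l1 l2 dh r : R) : 0 < r ->
  (forall x, 0 < x -> ex_RInt (chord_slope f1 l1) 0 x) ->
  (forall x, 0 < x -> ex_RInt (chord_slope f2 l2) 0 x) ->
  ex_derive f1 r -> ex_derive f2 (/ r) -> is_derive h r dh ->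
  f1 r - f2 (/ r) = r * dh ->
  is_derive (fun x => RInt (chord_slope f1 l1) 0 x + RInt (chord_slope f2 l2) 0 (/ x) - h x) r 0.
Proof.
  intros Hr Hex1 Hex2 Hd1 Hd2 Hh Hf.
  assert (Hr' : 0 < / r) by (apply Rinv_0_lt_compat; auto).
  assert (Hinv : is_derive (fun x => / x) r (- / r ^ 2)) by (auto_derive; [lra | field; lra]).
  pose proof (is_derive_comp _ _ r _ _ (is_derive_RInt_chord_slope f2 l2 (/ r) Hr' Hex2 Hd2) Hinv)
    as H2.
  pose proof (is_derive_minus _ _ r _ _
    (is_derive_plus _ _ r _ _ (is_derive_RInt_chord_slope f1 l1 r Hr Hex1 Hd1) H2) Hh) as H.
  match goal with |- is_derive ?F _ _ => set (Phi := F) end.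
  replace 0 with (f1 r / r + - / r ^ 2 * (f2 (/ r) / / r) - dh); [exact H |].
  apply Rmult_eq_reg_r with r; [| lra].
  replace ((f1 r / r + - / r ^ 2 * (f2 (/ r) / / r) - dh) * r) with (f1 r - f2 (/ r) - r * dh)
    by (field; lra).
  lra.
Qed.

Lemma is_derive_0_const_pos (f : R -> R) :
  (forall r, 0 < r -> is_derive f r 0) -> forall r, 0 < r -> f r = f 1.
Proof.
  intros H r Hr; destruct (Rlt_le_dec r 1) as [H1 | H1].
  - apply (eq_is_derive (V := R_NormedModule)); auto; intros t Ht; apply H; lra.
  - destruct (Req_dec r 1) as [-> | E]; auto; symmetry.
    apply (eq_is_derive (V := R_NormedModule)); [| lra]; intros t Ht; apply H; lra.
Qed.

(* For x = (a, b): |1 - s x|^2, Re log (1 - s x) and Im log (1 - s x); [off_cut a b s]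
   says that 1 - s x avoids the branch cut (-oo, 0] of the logarithm. *)
Definition sqnorm_1m (a b s : R) : R := (1 - s * a) ^ 2 + (s * b) ^ 2.
Definition re_log_1m (a b s : R) : R := ln (sqnorm_1m a b s) / 2.
Definition im_log_1m (a b s : R) : R :=
  2 * atan (- (s * b) / (sqrt (sqnorm_1m a b s) + (1 - s * a))).
Definition off_cut (a b s : R) : Prop := s * b <> 0 \/ 0 < 1 - s * a.

Definition re_Li2_integrand (a b : R) : R -> R := chord_slope (re_log_1m a b) (- a).
Definition im_Li2_integrand (a b : R) : R -> R := chord_slope (im_log_1m a b) (- b).

Lemma Cmod_1m (a b s : R) : Cmod (1 - s * a, - (s * b)) = sqrt (sqnorm_1m a b s).
Proof. unfold Cmod, sqnorm_1m; simpl; f_equal; ring. Qed.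

Lemma sqnorm_1m_pos (a b s : R) : off_cut a b s -> 0 < sqnorm_1m a b s.
Proof.
  unfold sqnorm_1m; pose proof (pow2_ge_0 (1 - s * a)); pose proof (pow2_ge_0 (s * b)).
  intros [Hb | Ha]; [pose proof (pow2_gt_0 _ Hb) | pose proof (pow2_gt_0 (1 - s * a) ltac:(lra))];
    lra.
Qed.

Lemma off_cut_half_angle_pos (a b s : R) : off_cut a b s ->
  0 < sqrt (sqnorm_1m a b s) + (1 - s * a).
Proof.
  intros H; rewrite <- Cmod_1m; apply (Cmod_add_Re_pos (1 - s * a, - (s * b))).
  simpl; destruct H as [H | H]; [left; lra | right; lra].
Qed.

Lemma ln_sqrt (x : R) : 0 < x -> ln (sqrt x) = ln x / 2.
Proof.
  intros Hx; assert (0 < sqrt x) by (apply sqrt_lt_R0; auto).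
  rewrite <- (sqrt_sqrt x) at 2 by lra; rewrite ln_mult by auto; field.
Qed.

Lemma Clog_1m (a b s : R) : off_cut a b s ->
  Clog (1 - s * a, - (s * b)) = (re_log_1m a b s, im_log_1m a b s).
Proof.
  intros H; unfold Clog; f_equal.
  - rewrite Cmod_1m; apply ln_sqrt, sqnorm_1m_pos; auto.
  - rewrite Carg_half_angle, Cmod_1m; [reflexivity |].
    simpl; destruct H as [H | H]; [left; lra | right; lra].
Qed.

Lemma re_log_1m_0 (a b : R) : re_log_1m a b 0 = 0.
Proof.
  unfold re_log_1m, sqnorm_1m; replace ((1 - 0 * a) ^ 2 + (0 * b) ^ 2) with 1 by ring.
  rewrite ln_1; lra.
Qed.

Lemma im_log_1m_0 (a b : R) : im_log_1m a b 0 = 0.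
Proof.
  unfold im_log_1m; replace (- (0 * b)) with 0 by ring.
  unfold Rdiv; rewrite Rmult_0_l, atan_0; lra.
Qed.

Lemma is_derive_re_log_1m_0 (a b : R) : is_derive (re_log_1m a b) 0 (- a).
Proof.
  unfold re_log_1m, sqnorm_1m; auto_derive;
    replace ((1 + - (0 * a)) * ((1 + - (0 * a)) * 1) + 0 * b * (0 * b * 1)) with 1 by ring;
    [lra | field].
Qed.

Lemma is_derive_im_log_1m_0 (a b : R) : is_derive (im_log_1m a b) 0 (- b).
Proof.
  unfold im_log_1m, sqnorm_1m; auto_derive;
    replace ((1 + - (0 * a)) * ((1 + - (0 * a)) * 1) + 0 * b * (0 * b * 1)) with 1 by ring;
    rewrite sqrt_1.
  - repeat split; lra.
  - replace (1 + (1 + - (0 * a))) with 2 by ring; replace (- (0 * b)) with 0 by ring; field.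
Qed.

Lemma ex_derive_re_log_1m (a b s : R) : off_cut a b s -> ex_derive (re_log_1m a b) s.
Proof.
  intros H; pose proof (sqnorm_1m_pos a b s H); unfold re_log_1m, sqnorm_1m in *.
  auto_derive; lra.
Qed.

Lemma ex_derive_im_log_1m (a b s : R) : off_cut a b s -> ex_derive (im_log_1m a b) s.
Proof.
  intros H; pose proof (sqnorm_1m_pos a b s H); pose proof (off_cut_half_angle_pos a b s H).
  unfold im_log_1m, sqnorm_1m in *; auto_derive.
  match goal with |- context [sqrt ?e] =>
    replace e with ((1 - s * a) ^ 2 + (s * b) ^ 2) by ring end.
  repeat split; lra.
Qed.

Lemma ex_RInt_re_Li2_integrand (a b X : R) : 0 <= X ->
  (forall s, 0 < s <= X -> off_cut a b s) -> ex_RInt (re_Li2_integrand a b) 0 X.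
Proof.
  intros HX H; apply ex_RInt_chord_slope; auto.
  - apply re_log_1m_0.
  - apply is_derive_re_log_1m_0.
  - intros s Hs; apply ex_derive_re_log_1m; auto.
Qed.

Lemma ex_RInt_im_Li2_integrand (a b X : R) : 0 <= X ->
  (forall s, 0 < s <= X -> off_cut a b s) -> ex_RInt (im_Li2_integrand a b) 0 X.
Proof.
  intros HX H; apply ex_RInt_chord_slope; auto.
  - apply im_log_1m_0.
  - apply is_derive_im_log_1m_0.
  - intros s Hs; apply ex_derive_im_log_1m; auto.
Qed.

Lemma Li2_integrand_1m (x : C) (t : R) : t <> 0 -> off_cut (Re x) (Im x) t ->
  Cdiv (Clog (Cminus 1 (Cmult (RtoC t) x))) (RtoC t) =
  (re_Li2_integrand (Re x) (Im x) t, im_Li2_integrand (Re x) (Im x) t).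
Proof.
  intros Ht H.
  replace (Cminus 1 (Cmult (RtoC t) x)) with ((1 - t * Re x, - (t * Im x)) : C)
    by (destruct x; unfold Cminus, Cplus, Copp, Cmult, RtoC; simpl; f_equal; ring).
  rewrite Clog_1m by auto.
  unfold re_Li2_integrand, im_Li2_integrand, chord_slope.
  destruct (Req_EM_T t 0); [contradiction |].
  unfold Cdiv, Cmult, Cinv, RtoC; simpl; f_equal; field; auto.
Qed.

Lemma Li2_re_im (x : C) : (forall s, 0 < s <= 1 -> off_cut (Re x) (Im x) s) ->
  Li2 x = (- RInt (re_Li2_integrand (Re x) (Im x)) 0 1,
           - RInt (im_Li2_integrand (Re x) (Im x)) 0 1).
Proof.
  intros H; unfold Li2.
  enough (HR : is_RInt (V := C_R_CompleteNormedModule)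
             (fun t : R => Cdiv (Clog (Cminus 1 (Cmult (RtoC t) x))) (RtoC t)) 0 1
             (RInt (re_Li2_integrand (Re x) (Im x)) 0 1,
              RInt (im_Li2_integrand (Re x) (Im x)) 0 1))
    by (rewrite (is_RInt_unique _ _ _ _ HR); reflexivity).
  apply (is_RInt_fct_extend_pair (U := R_NormedModule) (V := R_NormedModule)).
  - apply (is_RInt_ext (re_Li2_integrand (Re x) (Im x))).
    + intros t Ht; rewrite Rmin_left, Rmax_right in Ht by lra.
      rewrite Li2_integrand_1m by (try apply H; lra); reflexivity.
    + apply (RInt_correct (V := R_CompleteNormedModule)), ex_RInt_re_Li2_integrand; auto; lra.
  - apply (is_RInt_ext (im_Li2_integrand (Re x) (Im x))).
    + intros t Ht; rewrite Rmin_left, Rmax_right in Ht by lra.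
      rewrite Li2_integrand_1m by (try apply H; lra); reflexivity.
    + apply (RInt_correct (V := R_CompleteNormedModule)), ex_RInt_im_Li2_integrand; auto; lra.
Qed.

Lemma off_cut_dilate (a b r s : R) : off_cut a b (r * s) -> off_cut (r * a) (r * b) s.
Proof.
  unfold off_cut; intros [H | H]; [left | right; lra].
  intros E; apply H; rewrite <- E; ring.
Qed.

Lemma RInt_re_Li2_integrand_dilate (a b r : R) : 0 < r ->
  (forall s, 0 < s <= r -> off_cut a b s) ->
  RInt (re_Li2_integrand (r * a) (r * b)) 0 1 = RInt (re_Li2_integrand a b) 0 r.
Proof.
  intros Hr H; apply RInt_chord_slope_dilate; auto.
  - intros y; unfold re_log_1m, sqnorm_1m; do 3 f_equal; ring.
  - ring.
  - apply ex_RInt_re_Li2_integrand; auto; lra.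
Qed.

Lemma RInt_im_Li2_integrand_dilate (a b r : R) : 0 < r ->
  (forall s, 0 < s <= r -> off_cut a b s) ->
  RInt (im_Li2_integrand (r * a) (r * b)) 0 1 = RInt (im_Li2_integrand a b) 0 r.
Proof.
  intros Hr H; apply RInt_chord_slope_dilate; auto.
  - intros y; unfold im_log_1m, sqnorm_1m.
    replace (y * (r * a)) with (r * y * a) by ring; replace (y * (r * b)) with (r * y * b) by ring.
    reflexivity.
  - ring.
  - apply ex_RInt_im_Li2_integrand; auto; lra.
Qed.

Lemma re_Li2_integrand_conj (a b t : R) : re_Li2_integrand a (- b) t = re_Li2_integrand a b t.
Proof.
  unfold re_Li2_integrand, chord_slope, re_log_1m, sqnorm_1m.
  replace ((t * - b) ^ 2) with ((t * b) ^ 2) by ring; reflexivity.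
Qed.

Lemma im_Li2_integrand_conj (a b t : R) :
  im_Li2_integrand a (- b) t = - im_Li2_integrand a b t.
Proof.
  unfold im_Li2_integrand, chord_slope, im_log_1m, sqnorm_1m.
  replace ((t * - b) ^ 2) with ((t * b) ^ 2) by ring.
  destruct (Req_EM_T t 0); [ring |].
  replace (- (t * - b)) with (- - (t * b)) by ring.
  unfold Rdiv; rewrite Ropp_mult_distr_l_reverse, atan_opp; field; auto.
Qed.

Lemma sin_eq0_cos (th : R) : 0 < th < 2 * PI -> sin th = 0 -> cos th = -1.
Proof.
  intros Hth Hs; destruct (sin_eq_0_0 th Hs) as [k ->].
  pose proof PI_RGT_0.
  assert (Hk : 0 < IZR k < 2) by (split; apply (Rmult_lt_reg_r PI); lra).
  destruct Hk as [Hk1 Hk2]; apply lt_IZR in Hk1; apply lt_IZR in Hk2.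
  replace k with 1%Z by lia; rewrite Rmult_1_l; apply cos_PI.
Qed.

Lemma off_cut_circle (th s : R) : 0 < th < 2 * PI -> 0 < s ->
  off_cut (cos th) (sin th) s /\ off_cut (cos th) (- sin th) s.
Proof.
  intros Hth Hs; unfold off_cut; destruct (Req_dec (sin th) 0) as [E | E].
  - rewrite (sin_eq0_cos th Hth E); split; right; lra.
  - split; left; intros F; apply E; nra.
Qed.

Lemma sqnorm_1m_inv (c sn r : R) : c ^ 2 + sn ^ 2 = 1 -> 0 < r ->
  sqnorm_1m c sn r = r ^ 2 * sqnorm_1m c (- sn) (/ r).
Proof. intros H Hr; unfold sqnorm_1m; field_simplify; [nra | lra]. Qed.

Lemma cos2_sin2 (th : R) : cos th ^ 2 + sin th ^ 2 = 1.
Proof. rewrite <- (sin2_cos2 th); unfold Rsqr; ring. Qed.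

Lemma re_log_1m_inv (th r : R) : 0 < th < 2 * PI -> 0 < r ->
  re_log_1m (cos th) (sin th) r - re_log_1m (cos th) (- sin th) (/ r) = ln r.
Proof.
  intros Hth Hr; assert (Hr' : 0 < / r) by (apply Rinv_0_lt_compat; auto).
  pose proof (sqnorm_1m_pos _ _ _ (proj2 (off_cut_circle th (/ r) Hth Hr'))).
  unfold re_log_1m; rewrite sqnorm_1m_inv by (auto using cos2_sin2).
  rewrite ln_mult by (try apply pow_lt; lra).
  simpl; rewrite Rmult_1_r, ln_mult by lra; field.
Qed.

Lemma Carg_mult_polar (w : C) (r phi : R) : w <> 0%C -> 0 < r ->
  - PI < Carg w + phi <= PI -> Carg (Cmult (r * cos phi, r * sin phi) w) = Carg w + phi.
Proof.
  intros Hw Hr Hphi; destruct (Carg_polar w Hw) as [Hre Him].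
  assert (Hm : Cmod (r * cos phi, r * sin phi) = r).
  { unfold Cmod; transitivity (sqrt (r ^ 2)); [f_equal; cbn [fst snd] | apply sqrt_pow2; lra].
    rewrite <- (Rmult_1_r (r ^ 2)), <- (cos2_sin2 phi); ring. }
  apply Carg_unique; auto.
  - apply Cmult_neq_0; auto; intros E; apply (f_equal Cmod) in E.
    rewrite Hm, Cmod_0 in E; lra.
  - rewrite Cmod_mult, Hm, cos_plus.
    change (r * cos phi * Re w - r * sin phi * Im w
            = r * Cmod w * (cos (Carg w) * cos phi - sin (Carg w) * sin phi)).
    rewrite Hre, Him; ring.
  - rewrite Cmod_mult, Hm, sin_plus.
    change (r * cos phi * Im w + r * sin phi * Re w
            = r * Cmod w * (sin (Carg w) * cos phi + cos (Carg w) * sin phi)).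
    rewrite Hre, Him; ring.
Qed.

Lemma im_log_1m_Carg (a b s : R) : off_cut a b s ->
  im_log_1m a b s = Carg (1 - s * a, - (s * b)).
Proof. intros H; exact (eq_sym (f_equal snd (Clog_1m a b s H))). Qed.

(* 1 - r e^(i th) = r e^(i (th - pi)) (1 - e^(-i th) / r). *)
Lemma im_log_1m_inv (th r : R) : 0 < th < 2 * PI -> 0 < r ->
  im_log_1m (cos th) (sin th) r = im_log_1m (cos th) (- sin th) (/ r) + (th - PI).
Proof.
  intros Hth Hr; assert (Hr' : 0 < / r) by (apply Rinv_0_lt_compat; auto).
  pose proof (proj1 (off_cut_circle th r Hth Hr)) as Hcut.
  pose proof (proj2 (off_cut_circle th (/ r) Hth Hr')) as Hcut'.
  rewrite !im_log_1m_Carg by auto.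
  set (w := (1 - / r * cos th, - (/ r * - sin th)) : C).
  assert (Hw : w <> 0%C).
  { intros E; apply (f_equal Cmod) in E; unfold w in E.
    rewrite Cmod_1m, Cmod_0 in E; apply sqnorm_1m_pos in Hcut'.
    apply sqrt_lt_R0 in Hcut'; lra. }
  replace ((1 - r * cos th, - (r * sin th)) : C)
    with (Cmult (r * cos (th - PI), r * sin (th - PI)) w).
  2:{ unfold w, Cmult; rewrite cos_minus, sin_minus, cos_PI, sin_PI; cbn [fst snd].
      f_equal; [| field; lra].
      transitivity (cos th ^ 2 + sin th ^ 2 - r * cos th); [field; lra | rewrite cos2_sin2; ring]. }
  apply Carg_mult_polar; auto.
  assert (Hsw : Im w = / r * sin th) by (unfold w; simpl; ring).
  clearbody w; clear Hcut Hcut'.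
  destruct (Rlt_le_dec (sin th) 0) as [Hs | Hs].
  - assert (PI < th) by (destruct (Rle_lt_dec th PI); auto; pose proof (sin_ge_0 th); lra).
    assert (Im w < 0) by (rewrite Hsw, <- (Rmult_0_r (/ r)); apply Rmult_lt_compat_l; auto).
    pose proof (Carg_Im_lt0 w ltac:(assumption)); lra.
  - assert (th <= PI)
      by (destruct (Rle_lt_dec th PI); auto; pose proof (sin_lt_0 th); lra).
    assert (0 <= Im w) by (rewrite Hsw; apply Rmult_le_pos; lra).
    pose proof (Carg_Im_ge0 w ltac:(assumption)); lra.
Qed.

Lemma ex_RInt_Li2_integrand_circle (th r : R) : 0 < th < 2 * PI -> 0 < r ->
  ex_RInt (re_Li2_integrand (cos th) (sin th)) 0 r /\
  ex_RInt (re_Li2_integrand (cos th) (- sin th)) 0 r /\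
  ex_RInt (im_Li2_integrand (cos th) (sin th)) 0 r /\
  ex_RInt (im_Li2_integrand (cos th) (- sin th)) 0 r.
Proof.
  intros Hth Hr.
  assert (H : forall s, 0 < s <= r ->
            off_cut (cos th) (sin th) s /\ off_cut (cos th) (- sin th) s)
    by (intros s Hs; apply off_cut_circle; lra).
  split; [| split; [| split]];
    [apply ex_RInt_re_Li2_integrand | apply ex_RInt_re_Li2_integrand
    | apply ex_RInt_im_Li2_integrand | apply ex_RInt_im_Li2_integrand];
    solve [lra | intros s Hs; apply H; auto].
Qed.

Lemma re_Li2_radial_inversion (th r : R) : 0 < th < 2 * PI -> 0 < r ->
  RInt (re_Li2_integrand (cos th) (sin th)) 0 r
  + RInt (re_Li2_integrand (cos th) (- sin th)) 0 (/ r) - ln r ^ 2 / 2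
  = 2 * RInt (re_Li2_integrand (cos th) (sin th)) 0 1.
Proof.
  intros Hth Hr.
  pose proof (ex_RInt_Li2_integrand_circle th) as Hex.
  rewrite (is_derive_0_const_pos (fun x => RInt (re_Li2_integrand (cos th) (sin th)) 0 x
    + RInt (re_Li2_integrand (cos th) (- sin th)) 0 (/ x) - ln x ^ 2 / 2)); auto.
  - rewrite Rinv_1, ln_1, (RInt_ext (re_Li2_integrand (cos th) (- sin th))
      (re_Li2_integrand (cos th) (sin th))) by (intros; apply re_Li2_integrand_conj).
    lra.
  - intros x Hx; assert (Hx' : 0 < / x) by (apply Rinv_0_lt_compat; auto).
    apply is_derive_RInt_chord_slope_inv with (dh := ln x / x); auto.
    + intros y Hy; apply Hex; auto.
    + intros y Hy; apply Hex; auto.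
    + apply ex_derive_re_log_1m, off_cut_circle; auto.
    + apply ex_derive_re_log_1m, off_cut_circle; auto.
    + auto_derive; [lra | field; lra].
    + rewrite re_log_1m_inv by auto; field; lra.
Qed.

Lemma im_Li2_radial_inversion (th r : R) : 0 < th < 2 * PI -> 0 < r ->
  RInt (im_Li2_integrand (cos th) (sin th)) 0 r
  + RInt (im_Li2_integrand (cos th) (- sin th)) 0 (/ r) - (th - PI) * ln r = 0.
Proof.
  intros Hth Hr.
  pose proof (ex_RInt_Li2_integrand_circle th) as Hex.
  rewrite (is_derive_0_const_pos (fun x => RInt (im_Li2_integrand (cos th) (sin th)) 0 x
    + RInt (im_Li2_integrand (cos th) (- sin th)) 0 (/ x) - (th - PI) * ln x)); auto.
  - rewrite Rinv_1, ln_1, (RInt_ext (im_Li2_integrand (cos th) (- sin th))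
      (fun t => - im_Li2_integrand (cos th) (sin th) t)) by (intros; apply im_Li2_integrand_conj).
    rewrite (RInt_opp (V := R_CompleteNormedModule)) by (apply Hex; lra).
    unfold opp; simpl; lra.
  - intros x Hx; assert (Hx' : 0 < / x) by (apply Rinv_0_lt_compat; auto).
    apply is_derive_RInt_chord_slope_inv with (dh := (th - PI) / x); auto.
    + intros y Hy; apply Hex; auto.
    + intros y Hy; apply Hex; auto.
    + apply ex_derive_im_log_1m, off_cut_circle; auto.
    + apply ex_derive_im_log_1m, off_cut_circle; auto.
    + auto_derive; [lra | field; lra].
    + rewrite im_log_1m_inv by auto; field; lra.
Qed.

Definition neg_re_Li2_circle (th : R) : R := RInt (re_Li2_integrand (cos th) (sin th)) 0 1.

Lemma sqnorm_1m_circle (u v : R) : sqnorm_1m (cos u) (sin u) v = (v - cos u) ^ 2 + sin u ^ 2.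
Proof. unfold sqnorm_1m; pose proof (cos2_sin2 u); nra. Qed.

Lemma sqnorm_1m_circle_pos (u v : R) : 0 < u < 2 * PI -> -1 < v ->
  0 < sqnorm_1m (cos u) (sin u) v.
Proof.
  intros Hu Hv; rewrite sqnorm_1m_circle; destruct (Req_dec (sin u) 0) as [E | E].
  - rewrite E, (sin_eq0_cos u Hu E); nra.
  - pose proof (pow2_ge_0 (v - cos u)); pose proof (pow2_gt_0 _ E); lra.
Qed.

Lemma is_derive_re_Li2_integrand_angle (u v : R) : 0 < u < 2 * PI -> -1 < v ->
  is_derive (fun th => re_Li2_integrand (cos th) (sin th) v) u
    (sin u / sqnorm_1m (cos u) (sin u) v).
Proof.
  intros Hu Hv; pose proof (sqnorm_1m_circle_pos u v Hu Hv) as Hp.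
  unfold re_Li2_integrand, chord_slope, re_log_1m, sqnorm_1m in *.
  destruct (Req_EM_T v 0) as [-> | E].
  - auto_derive; [auto | replace ((1 - 0 * cos u) ^ 2 + (0 * sin u) ^ 2) with 1 by ring; field].
  - auto_derive;
      replace ((1 + - (v * cos u)) * ((1 + - (v * cos u)) * 1) + v * sin u * (v * sin u * 1))
        with ((1 - v * cos u) ^ 2 + (v * sin u) ^ 2) by ring;
      [lra | field; split; lra].
Qed.

Lemma continuity_2d_pt_angle_derivative (th t : R) : 0 < th < 2 * PI -> -1 < t ->
  continuity_2d_pt (fun u v => sin u / sqnorm_1m (cos u) (sin u) v) th t.
Proof.
  intros Hth Ht.
  assert (Cs : continuity_2d_pt (fun u v => sin u) th t)
    by (apply (continuity_1d_2d_pt_comp sin (fun u v => u));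
        [apply continuity_sin | apply continuity_2d_pt_id1]).
  assert (Cc : continuity_2d_pt (fun u v => cos u) th t)
    by (apply (continuity_1d_2d_pt_comp cos (fun u v => u));
        [apply continuity_cos | apply continuity_2d_pt_id1]).
  assert (CM : continuity_2d_pt (fun u v => sqnorm_1m (cos u) (sin u) v) th t).
  { apply (continuity_2d_pt_ext
             (fun u v => (1 - v * cos u) * (1 - v * cos u) + (v * sin u) * (v * sin u)));
      [intros; unfold sqnorm_1m; ring |].
    apply continuity_2d_pt_plus; apply continuity_2d_pt_mult;
      try apply continuity_2d_pt_minus; try apply continuity_2d_pt_mult;
      try apply continuity_2d_pt_const; try apply continuity_2d_pt_id2; auto. }
  apply continuity_2d_pt_mult; auto.
  apply continuity_2d_pt_inv; auto.
  pose proof (sqnorm_1m_circle_pos th t Hth Ht); lra.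
Qed.

Lemma is_derive_neg_re_Li2_circle (th : R) : 0 < th < 2 * PI ->
  is_derive neg_re_Li2_circle th (RInt (fun t => sin th / sqnorm_1m (cos th) (sin th) t) 0 1).
Proof.
  intros Hth.
  assert (HD : forall u v, 0 < u < 2 * PI -> -1 < v ->
     Derive (fun z => re_Li2_integrand (cos z) (sin z) v) u
     = sin u / sqnorm_1m (cos u) (sin u) v)
    by (intros; apply is_derive_unique, is_derive_re_Li2_integrand_angle; auto).
  rewrite (RInt_ext _ (fun t => Derive (fun u => re_Li2_integrand (cos u) (sin u) t) th))
    by (intros x Hx; rewrite Rmin_left, Rmax_right in Hx by lra; rewrite HD; auto; lra).
  apply (is_derive_RInt_param (fun u t => re_Li2_integrand (cos u) (sin u) t) 0 1 th).
  - apply (locally_interval _ th 0 (2 * PI)); simpl; try lra.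
    intros y Hy1 Hy2 t Ht; rewrite Rmin_left, Rmax_right in Ht by lra.
    eexists; apply is_derive_re_Li2_integrand_angle; lra.
  - intros t Ht; rewrite Rmin_left, Rmax_right in Ht by lra.
    apply (continuity_2d_pt_ext_loc (fun u v => sin u / sqnorm_1m (cos u) (sin u) v)).
    + assert (Hd : 0 < Rmin (Rmin th (2 * PI - th)) (1 / 2))
        by (apply Rmin_glb_lt; [apply Rmin_glb_lt |]; lra).
      exists (mkposreal _ Hd); intros u v Hu Hv; simpl in Hu, Hv.
      pose proof (Rmin_l (Rmin th (2 * PI - th)) (1 / 2)).
      pose proof (Rmin_r (Rmin th (2 * PI - th)) (1 / 2)).
      pose proof (Rmin_l th (2 * PI - th)); pose proof (Rmin_r th (2 * PI - th)).
      apply Rabs_def2 in Hu; apply Rabs_def2 in Hv.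
      rewrite HD; auto; lra.
    + apply continuity_2d_pt_angle_derivative; lra.
  - apply (locally_interval _ th 0 (2 * PI)); simpl; try lra.
    intros y Hy1 Hy2; apply (ex_RInt_Li2_integrand_circle y 1); lra.
Qed.

(* An antiderivative in t is atan ((t - cos th) / sin th). *)
Lemma RInt_angle_derivative (th : R) : 0 < th <= PI ->
  RInt (fun t => sin th / sqnorm_1m (cos th) (sin th) t) 0 1 = (PI - th) / 2.
Proof.
  intros Hth; pose proof PI_RGT_0.
  destruct (Req_dec th PI) as [-> | Hne].
  { rewrite sin_PI, (RInt_ext _ (fun _ => 0)) by (intros; unfold Rdiv; apply Rmult_0_l).
    rewrite RInt_const; unfold scal; simpl; unfold mult; simpl; lra. }
  assert (Hs : 0 < sin th) by (apply sin_gt_0; lra).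
  assert (Hp : forall t, 0 <= t <= 1 -> 0 < sqnorm_1m (cos th) (sin th) t)
    by (intros t Ht; apply sqnorm_1m_circle_pos; lra).
  rewrite (is_RInt_unique _ _ _
             (atan ((1 - cos th) / sin th) - atan ((0 - cos th) / sin th))).
  2:{ apply (is_RInt_derive (V := R_CompleteNormedModule) (fun t => atan ((t - cos th) / sin th)));
      intros x Hx; rewrite Rmin_left, Rmax_right in Hx by lra; pose proof (Hp x Hx) as Hpx.
      - rewrite sqnorm_1m_circle in *; auto_derive; [lra | unfold Rsqr; field; split; nra].
      - apply (ex_derive_continuous (K := R_AbsRing) (V := R_NormedModule)).
        unfold sqnorm_1m in *; auto_derive; lra. }
  assert (Hc : 0 < cos (th / 2)) by (apply cos_gt_0; lra).
  assert (Hs2 : 0 < sin (th / 2)) by (apply sin_gt_0; lra).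
  replace ((1 - cos th) / sin th) with (tan (th / 2)).
  2:{ replace th with (2 * (th / 2)) at 2 3 by field.
      rewrite cos_2a_sin, sin_2a; unfold tan; field; lra. }
  replace ((0 - cos th) / sin th) with (- tan (PI / 2 - th))
    by (unfold tan; rewrite sin_shift, cos_shift; field; lra).
  rewrite atan_opp, !atan_tan; lra.
Qed.

Lemma neg_re_Li2_circle_shift (th : R) : 0 < th <= PI ->
  neg_re_Li2_circle th + (th - PI) ^ 2 / 4 = neg_re_Li2_circle PI.
Proof.
  intros Hth; destruct (Req_dec th PI) as [-> | E]; [lra |].
  pose proof PI_RGT_0.
  replace (neg_re_Li2_circle PI) with (neg_re_Li2_circle PI + (PI - PI) ^ 2 / 4) by lra.
  apply (eq_is_derive (V := R_NormedModule) (fun x => neg_re_Li2_circle x + (x - PI) ^ 2 / 4));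
    [| lra].
  intros t Ht.
  assert (Hsq : is_derive (fun x => (x - PI) ^ 2 / 4) t ((t - PI) / 2))
    by (auto_derive; [auto | field]).
  pose proof (is_derive_plus _ _ t _ _ (is_derive_neg_re_Li2_circle t ltac:(lra)) Hsq) as Hsum.
  rewrite RInt_angle_derivative in Hsum by lra.
  change (plus ?a ?b) with (a + b) in Hsum at 2.
  replace ((PI - t) / 2 + (t - PI) / 2) with 0 in Hsum by field.
  exact Hsum.
Qed.

Lemma neg_re_Li2_circle_reflect (th : R) : neg_re_Li2_circle (2 * PI - th) = neg_re_Li2_circle th.
Proof.
  unfold neg_re_Li2_circle; rewrite cos_minus, sin_minus, cos_2PI, sin_2PI.
  replace (1 * cos th + 0 * sin th) with (cos th) by ring.
  replace (0 * cos th - 1 * sin th) with (- sin th) by ring.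
  apply RInt_ext; intros; apply re_Li2_integrand_conj.
Qed.

Definition log1p_slope : R -> R := chord_slope (fun s => ln (1 + s)) 1.

Lemma log1p_slope_continuous (s : R) : 0 <= s -> continuous log1p_slope s.
Proof.
  intros Hs; destruct (Req_dec s 0) as [-> | E].
  - apply chord_slope_continuous0; [rewrite Rplus_0_r; apply ln_1 |].
    auto_derive; [lra | field].
  - apply chord_slope_continuous; auto; auto_derive; lra.
Qed.

Lemma neg_re_Li2_circle_PI : neg_re_Li2_circle PI = RInt log1p_slope 0 1.
Proof.
  unfold neg_re_Li2_circle; rewrite cos_PI, sin_PI; apply RInt_ext; intros t Ht.
  rewrite Rmin_left, Rmax_right in Ht by lra.
  unfold re_Li2_integrand, log1p_slope, chord_slope; destruct (Req_EM_T t 0); [lra |].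
  unfold re_log_1m, sqnorm_1m.
  replace ((1 - t * -1) ^ 2 + (t * 0) ^ 2) with ((1 + t) * (1 + t)) by ring.
  rewrite ln_mult by lra.
  (* [RInt_ext] states this equation at the carrier of [R_CompleteNormedModule], which
     [field] does not recognise as [R]. *)
  match goal with |- ?A = ?B => change (@eq R A B) end; field; auto.
Qed.

(* Substituting s = t^2. *)
Lemma neg_re_Li2_circle_PI2 : 4 * neg_re_Li2_circle (PI / 2) = RInt log1p_slope 0 1.
Proof.
  unfold neg_re_Li2_circle; rewrite cos_PI2, sin_PI2.
  pose proof (RInt_comp (V := R_CompleteNormedModule) log1p_slope (fun y => y ^ 2)
                (fun y => 2 * y) 0 1) as H.
  simpl in H; rewrite Rmult_0_l, !Rmult_1_l in H; rewrite <- H.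
  - rewrite <- (RInt_scal (V := R_CompleteNormedModule))
      by (apply ex_RInt_re_Li2_integrand; [lra | intros s Hs; right; lra]).
    apply RInt_ext; intros y Hy; rewrite Rmin_left, Rmax_right in Hy by lra.
    change (4 * re_Li2_integrand 0 1 y = (2 * y) * log1p_slope (y * (y * 1))).
    unfold re_Li2_integrand, log1p_slope, chord_slope.
    destruct (Req_EM_T y 0); [lra |].
    destruct (Req_EM_T (y * (y * 1)) 0); [nra |].
    unfold re_log_1m, sqnorm_1m.
    replace ((1 - y * 0) ^ 2 + (y * 1) ^ 2) with (1 + y * (y * 1)) by ring.
    field; lra.
  - intros x Hx; rewrite Rmin_left, Rmax_right in Hx by lra; apply log1p_slope_continuous; nra.
  - intros x Hx; split; [auto_derive; [auto | ring] |].
    apply (ex_derive_continuous (K := R_AbsRing) (V := R_NormedModule)); auto_derive; auto.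
Qed.

(* Comparing th = PI/2 with th = PI in two ways (the shift lemma and the substitution
   s = t^2) pins down neg_re_Li2_circle PI = PI^2/12 without evaluating the integral. *)
Lemma neg_re_Li2_circle_val (th : R) : 0 < th < 2 * PI ->
  neg_re_Li2_circle th = PI ^ 2 / 12 - (th - PI) ^ 2 / 4.
Proof.
  intros Hth; pose proof PI_RGT_0.
  pose proof (neg_re_Li2_circle_shift (PI / 2) ltac:(lra)) as K1.
  pose proof neg_re_Li2_circle_PI2 as K2; rewrite <- neg_re_Li2_circle_PI in K2.
  assert (KPI : neg_re_Li2_circle PI = PI ^ 2 / 12) by nra.
  destruct (Rle_dec th PI).
  - pose proof (neg_re_Li2_circle_shift th ltac:(lra)); lra.
  - rewrite <- neg_re_Li2_circle_reflect.
    pose proof (neg_re_Li2_circle_shift (2 * PI - th) ltac:(lra)); nra.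
Qed.

(* The classical inversion formula Li2 x + Li2 (1/x) = - PI^2/6 - log(-x)^2/2 for
   x = r e^(i th), where log(-x) = ln r + i (th - PI). *)
Lemma Li2_inversion (th r : R) : 0 < th < 2 * PI -> 0 < r ->
  Cplus (Li2 (r * cos th, r * sin th)) (Li2 (/ r * cos th, / r * - sin th)) =
  (- (PI ^ 2 / 6) - (ln r ^ 2 - (th - PI) ^ 2) / 2, - ((th - PI) * ln r)).
Proof.
  intros Hth Hr; assert (Hr' : 0 < / r) by (apply Rinv_0_lt_compat; auto).
  assert (Hcut : forall s, 0 < s -> off_cut (cos th) (sin th) s /\ off_cut (cos th) (- sin th) s)
    by (intros; apply off_cut_circle; auto).
  rewrite (Li2_re_im (r * cos th, r * sin th)), (Li2_re_im (/ r * cos th, / r * - sin th))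
    by (intros s Hs; apply off_cut_dilate, Hcut; nra).
  cbn [Re Im fst snd].
  rewrite RInt_re_Li2_integrand_dilate, RInt_im_Li2_integrand_dilate,
    RInt_re_Li2_integrand_dilate, RInt_im_Li2_integrand_dilate
    by (auto; intros s Hs; apply Hcut; lra).
  pose proof (re_Li2_radial_inversion th r Hth Hr) as Hre.
  pose proof (im_Li2_radial_inversion th r Hth Hr) as Him.
  fold (neg_re_Li2_circle th) in Hre; rewrite neg_re_Li2_circle_val in Hre by auto.
  unfold Cplus; cbn [fst snd]; f_equal; lra.
Qed.

Definition calL2_poly (w : C) : C :=
  Cmult (RtoC (PI ^ 2)) (Cplus (Cminus (Cmult 2 (Cmult w w)) (Cmult 2 w)) (RtoC (1 / 3))).

Lemma calL2_poly_Re_Im (w : C) : calL2_poly w =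
  (PI ^ 2 * (2 * (Re w ^ 2 - Im w ^ 2) - 2 * Re w + 1 / 3),
   PI ^ 2 * (4 * Re w * Im w - 2 * Im w)).
Proof.
  destruct w; unfold calL2_poly, Cmult, Cplus, Cminus, Copp, RtoC; simpl; f_equal; ring.
Qed.

Lemma Li2_Cexp_inversion (w : C) : 0 < Re w < 1 ->
  Li2 (Cexp (Cmult twopii w)) = Cminus (calL2_poly w) (Li2 (Cexp (Copp (Cmult twopii w)))).
Proof.
  destruct w as [a b]; simpl Re; intros Ha; pose proof PI_RGT_0.
  set (r := exp (- (2 * PI * b))); set (th := 2 * PI * a).
  replace (Cexp (Cmult twopii (a, b))) with ((r * cos th, r * sin th) : C)
    by (unfold Cexp, r, th, twopii; simpl; f_equal; f_equal; f_equal; ring).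
  replace (Cexp (Copp (Cmult twopii (a, b)))) with ((/ r * cos th, / r * - sin th) : C)
    by (unfold Cexp, r, th, twopii; simpl; rewrite <- exp_Ropp, <- cos_neg, <- sin_neg;
        f_equal; f_equal; f_equal; ring).
  assert (Hth : 0 < th < 2 * PI) by (unfold th; nra).
  assert (Hr : 0 < r) by apply exp_pos.
  replace (calL2_poly (a, b))
    with (Cplus (Li2 (r * cos th, r * sin th)) (Li2 (/ r * cos th, / r * - sin th))).
  - ring.
  - rewrite Li2_inversion, calL2_poly_Re_Im by auto.
    unfold r, th; rewrite ln_exp; simpl; f_equal; field.
Qed.

Lemma calL2_upper (w : C) : 0 < Re w < 1 -> calL2 w = Li2 (Cexp (Cmult twopii w)).
Proof.
  intros H; unfold calL2; fold twopii; destruct (Rle_dec 0 (Im w)); [reflexivity |].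
  rewrite Li2_Cexp_inversion by auto; reflexivity.
Qed.

Lemma calL2_lower (w : C) : 0 < Re w < 1 \/ Im w < 0 ->
  calL2 w = Cminus (calL2_poly w) (Li2 (Cexp (Copp (Cmult twopii w)))).
Proof.
  intros H; unfold calL2; fold twopii; destruct (Rle_dec 0 (Im w)); [| reflexivity].
  destruct H as [H | H]; [| lra].
  rewrite Li2_Cexp_inversion by auto; reflexivity.
Qed.

Lemma kappa_pos : 0 < kappa.
Proof.
  unfold kappa; rewrite <- ln_1; apply ln_increasing; [lra |].
  pose proof (sqrt_pos ((3 / 2) ^ 2 - 1)); lra.
Qed.

Lemma xi_neq0 (p : nat) : xi p <> RtoC 0.
Proof. intros E; apply (f_equal fst) in E; simpl in E; pose proof kappa_pos; lra. Qed.

Lemma twopii_neq0 : twopii <> RtoC 0.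
Proof.
  intros E; apply (f_equal snd) in E; unfold twopii, Cmult, Ci, RtoC in E; simpl in E.
  pose proof PI_RGT_0; lra.
Qed.

Lemma Cexp_add_twopii_nat (u : C) (k : nat) :
  Cexp (Cplus u (Cmult twopii (RtoC (INR k)))) = Cexp u.
Proof.
  unfold Cexp.
  replace (Re (Cplus u (Cmult twopii (RtoC (INR k))))) with (Re u)
    by (destruct u; unfold twopii, Cplus, Cmult, Ci, RtoC; simpl; ring).
  replace (Im (Cplus u (Cmult twopii (RtoC (INR k))))) with (Im u + 2 * INR k * PI)
    by (destruct u; unfold twopii, Cplus, Cmult, Ci, RtoC; simpl; ring).
  rewrite cos_period, sin_period; reflexivity.
Qed.

Definition F_arg1 (p : nat) (z : C) : C :=
  Cplus (Cminus (Cdiv (Cmult (xi p) (Cminus 1 z)) twopii) (RtoC (INR p))) 1.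
Definition F_arg2 (p : nat) (z : C) : C :=
  Cminus (Cdiv (Cmult (xi p) (Cplus 1 z)) twopii) (RtoC (INR p)).

Lemma F_arg1_Re (p : nat) (z : C) : Re (F_arg1 p z) = 1 - Im (Cmult (xi p) z) / (2 * PI).
Proof.
  pose proof PI_RGT_0; destruct z.
  unfold F_arg1, xi, twopii, Cdiv, Cinv, Cmult, Cminus, Cplus, Copp, Ci, RtoC; simpl; field; lra.
Qed.

Lemma F_arg1_Im (p : nat) (z : C) : Im (F_arg1 p z) = (Re (Cmult (xi p) z) - kappa) / (2 * PI).
Proof.
  pose proof PI_RGT_0; destruct z.
  unfold F_arg1, xi, twopii, Cdiv, Cinv, Cmult, Cminus, Cplus, Copp, Ci, RtoC; simpl; field; lra.
Qed.

Lemma F_arg2_Re (p : nat) (z : C) : Re (F_arg2 p z) = Im (Cmult (xi p) z) / (2 * PI).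
Proof.
  pose proof PI_RGT_0; destruct z.
  unfold F_arg2, xi, twopii, Cdiv, Cinv, Cmult, Cminus, Cplus, Copp, Ci, RtoC; simpl; field; lra.
Qed.

Lemma F_arg2_Im (p : nat) (z : C) :
  Im (F_arg2 p z) = - (kappa + Re (Cmult (xi p) z)) / (2 * PI).
Proof.
  pose proof PI_RGT_0; destruct z.
  unfold F_arg2, xi, twopii, Cdiv, Cinv, Cmult, Cminus, Cplus, Copp, Ci, RtoC; simpl; field; lra.
Qed.

Lemma F_args_Re_01 (p : nat) (z : C) : 0 < Im (Cmult (xi p) z) < 2 * PI ->
  0 < Re (F_arg1 p z) < 1 /\ 0 < Re (F_arg2 p z) < 1.
Proof.
  intros H; pose proof PI_RGT_0; rewrite F_arg1_Re, F_arg2_Re.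
  assert (0 < Im (Cmult (xi p) z) / (2 * PI) < 1).
  { split; [apply Rdiv_lt_0_compat; lra |].
    apply Rmult_lt_reg_r with (2 * PI); [lra |]; field_simplify; lra. }
  lra.
Qed.

Lemma F_args_Im_neg (p : nat) (z : C) : - kappa < Re (Cmult (xi p) z) < kappa ->
  Im (F_arg1 p z) < 0 /\ Im (F_arg2 p z) < 0.
Proof.
  intros H; pose proof PI_RGT_0; rewrite F_arg1_Im, F_arg2_Im.
  split; apply Rdiv_neg_pos; lra.
Qed.

Lemma calL2_poly_F_args (p : nat) (z : C) :
  Cminus (calL2_poly (F_arg1 p z)) (calL2_poly (F_arg2 p z)) =
  Cminus (Cmult (xi p) (Cminus (Cmult 2 (Cmult (RtoC kappa) z)) twopii))
         (RtoC (4 * INR p * PI ^ 2)).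
Proof.
  pose proof PI_RGT_0.
  rewrite !calL2_poly_Re_Im, F_arg1_Re, F_arg1_Im, F_arg2_Re, F_arg2_Im.
  destruct z; unfold Cminus, xi, twopii, Cmult, Cplus, Copp, Ci, RtoC; simpl.
  f_equal; field; lra.
Qed.

Lemma xi_1m_F_arg1 (p : nat) (z : C) : (0 < p)%nat ->
  Cmult (xi p) (Cminus 1 z)
  = Cplus (Cmult twopii (F_arg1 p z)) (Cmult twopii (RtoC (INR (p - 1)))).
Proof.
  intros Hp; pose proof twopii_neq0.
  rewrite minus_INR, RtoC_minus by lia; change (INR 1) with 1; unfold F_arg1; field; auto.
Qed.

Lemma xi_1p_F_arg2 (p : nat) (z : C) :
  Cmult (xi p) (Cplus 1 z) = Cplus (Cmult twopii (F_arg2 p z)) (Cmult twopii (RtoC (INR p))).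
Proof. pose proof twopii_neq0; unfold F_arg2; field; auto. Qed.

Lemma Cexp_F_arg1 (p : nat) (z : C) : (0 < p)%nat ->
  Cexp (Cmult twopii (F_arg1 p z)) = Cexp (Cmult (xi p) (Cminus 1 z)) /\
  Cexp (Copp (Cmult twopii (F_arg1 p z))) = Cexp (Copp (Cmult (xi p) (Cminus 1 z))).
Proof.
  intros Hp; rewrite xi_1m_F_arg1 by auto; split.
  - rewrite Cexp_add_twopii_nat; reflexivity.
  - symmetry; rewrite <- (Cexp_add_twopii_nat _ (p - 1)); f_equal; ring.
Qed.

Lemma Cexp_F_arg2 (p : nat) (z : C) :
  Cexp (Cmult twopii (F_arg2 p z)) = Cexp (Cmult (xi p) (Cplus 1 z)) /\
  Cexp (Copp (Cmult twopii (F_arg2 p z))) = Cexp (Copp (Cmult (xi p) (Cplus 1 z))).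
Proof.
  rewrite xi_1p_F_arg2; split.
  - rewrite Cexp_add_twopii_nat; reflexivity.
  - symmetry; rewrite <- (Cexp_add_twopii_nat _ p); f_equal; ring.
Qed.

Theorem lemma3p3 (p : nat) (hp : (0 < p)%nat) (z : C) :
  (((- kappa < Re (Cmult (xi p) z) < kappa) \/ (0 < Im (Cmult (xi p) z) < 2 * PI)) ->
    F p z =
    Cminus
      (Cplus
         (Cminus
            (Cdiv (Li2 (Cexp (Copp (Cmult (xi p) (Cplus 1 z))))) (xi p))
            (Cdiv (Li2 (Cexp (Copp (Cmult (xi p) (Cminus 1 z))))) (xi p)))
         (Cmult (RtoC kappa) z))
      (Cmult (RtoC (2 * PI)) Ci))
  /\
  ((0 < Im (Cmult (xi p) z) < 2 * PI) ->
    F p z =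
    Cplus
      (Cminus
         (Cminus
            (Cdiv (Li2 (Cexp (Cmult (xi p) (Cminus 1 z)))) (xi p))
            (Cdiv (Li2 (Cexp (Cmult (xi p) (Cplus 1 z)))) (xi p)))
         (Cmult (RtoC kappa) z))
      (Cdiv (RtoC (4 * INR p * PI ^ 2)) (xi p))).
Proof.
  pose proof (xi_neq0 p) as Hxi.
  destruct (Cexp_F_arg1 p z hp) as [E1 E1']; destruct (Cexp_F_arg2 p z) as [E2 E2'].
  unfold F; fold (F_arg1 p z) (F_arg2 p z); split.
  - intros Hz.
    assert (Hlow : (0 < Re (F_arg1 p z) < 1 \/ Im (F_arg1 p z) < 0) /\
                   (0 < Re (F_arg2 p z) < 1 \/ Im (F_arg2 p z) < 0)).
    { destruct Hz as [Hz | Hz];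
        [pose proof (F_args_Im_neg p z Hz) | pose proof (F_args_Re_01 p z Hz)]; tauto. }
    rewrite (calL2_lower _ (proj1 Hlow)), (calL2_lower _ (proj2 Hlow)), E1', E2'.
    replace (calL2_poly (F_arg1 p z)) with (Cplus (calL2_poly (F_arg2 p z))
      (Cminus (calL2_poly (F_arg1 p z)) (calL2_poly (F_arg2 p z)))) by ring.
    rewrite calL2_poly_F_args; unfold twopii; field; exact Hxi.
  - intros Hz; destruct (F_args_Re_01 p z Hz) as [H1 H2].
    rewrite (calL2_upper _ H1), (calL2_upper _ H2), E1, E2; field; exact Hxi.
Qed.
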